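(* Let $G=(V,E)$ be a Generalized Bartlett graph. If $V'\subset V$ and $G'=(V',E')$ is the induced subgraph of $G$ on $V'$, then $G'$ is also a Generalized Bartlett graph.
   Context: For a graph $(V,E)$ with $|V|=p$ and ordering $\sigma:V\to\{1,\dots,p\}$, set $E^\sigma_0=E$, $E^\sigma_i=E^\sigma_{i-1}\cup\{\{u,v\}:u\ne v,\sigma(u)>i,\sigma(v)>i,\{u,\sigma^{-1}(i)\},\{v,\sigma^{-1}(i)\}\in E^\sigma_{i-1}\}$ for $i=1,\dots,p-2$, and $D^\sigma(E)=E^\sigma_{p-2}$. The graph is Generalized Bartlett if there is an ordering $\sigma$ such that there are no $u,v,w$ with $\{u,v\},\{v,w\},\{u,w\}\notin E$ but all three in $D^\sigma(E)$. *)

From mathcomp Require Import all_boot.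
Set Implicit Arguments. Unset Strict Implicit. Unset Printing Implicit Defensive.

(* A simple graph on the finite vertex type T is a symmetric irreflexive
   relation e; e u v means {u,v} \in E.  An ordering sigma : V -> {1..p}
   is encoded as a bijection sigma : T -> 'I_#|T| (0-based), and
   ord1 sigma v := (sigma v).+1 is the 1-based position. *)

Definition ord1 (T : finType) (sigma : T -> 'I_#|T|) (v : T) : nat :=
  (sigma v).+1.

Fixpoint fill (T : finType) (e : rel T) (sigma : T -> 'I_#|T|) (i : nat)
  : rel T :=
  match i with
  | 0 => e
  | i'.+1 => fun u v =>
      fill e sigma i' u v ||
      [&& u != v, i < ord1 sigma u, i < ord1 sigma v &
          [exists w, [&& ord1 sigma w == i,
                         fill e sigma i' u w & fill e sigma i' v w]]]
  end.

Definition Dfill (T : finType) (e : rel T) (sigma : T -> 'I_#|T|) : rel T :=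
  fill e sigma (#|T| - 2).

Definition generalized_bartlett (T : finType) (e : rel T) : Prop :=
  exists sigma : T -> 'I_#|T|, bijective sigma /\
    ~ (exists u v w : T,
         [/\ ~~ e u v, ~~ e v w & ~~ e u w] /\
         [/\ Dfill e sigma u v, Dfill e sigma v w & Dfill e sigma u w]).

Definition induced (T : finType) (e : rel T) (A : {set T})
  : rel {x : T | x \in A} := fun x y => e (val x) (val y).

From Pilot Require Import Defs.
From mathcomp Require Import all_boot.
From mathcomp Require Import zify.
Set Implicit Arguments. Unset Strict Implicit. Unset Printing Implicit Defensive.

(* Restrict an elimination ordering of G to V' by ranking the vertices of V'
   in the order sigma gives them.  Every fill edge of the induced subgraph is
   then already a fill edge of G: the vertex eliminated at step j of the
   restricted ordering is eliminated by G's ordering at a step no later than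
   the current one, and strictly before both endpoints.  Since vertices of V'
   lie at least as high in G's ordering as in the restricted one, the last
   relevant step p'-2 of G' is covered by step p-2 of G.  Hence an unfilled
   triangle of G' would be one of G. *)

Lemma fill_monotone (T : finType) (e : rel T) (sigma : T -> 'I_#|T|) i k u v :
  i <= k -> fill e sigma i u v -> fill e sigma k u v.
Proof.
elim: k => [|k IHk]; first by rewrite leqn0 => /eqP ->.
rewrite leq_eqVlt => /orP [/eqP -> //|/IHk {}IHk] /= fill_i.
by rewrite IHk.
Qed.

Lemma fill_relpre (T U : finType) (e : rel T) (f : U -> T) (f_inj : injective f)
    (sigma : T -> 'I_#|T|) (tau : U -> 'I_#|U|)
    (tau_sigma : forall a b, tau a < tau b -> sigma (f a) < sigma (f b)) j :
  forall x y, fill (relpre f e) tau j x y ->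
  forall k, (forall a, Defs.ord1 tau a <= j -> Defs.ord1 sigma (f a) <= k) ->
  fill e sigma k (f x) (f y).
Proof.
elim: j => [|j IHj] x y /=; first by move=> exy k _; apply: (@fill_monotone _ _ _ 0).
case/orP=> [fill_j k below|]; first by apply: IHj fill_j _ _ => a le_a; apply: below; lia.
case/and4P=> neq_xy lt_x lt_y /existsP [w /and3P [/eqP tau_w fill_xw fill_yw]] k below.
have le_w_k : Defs.ord1 sigma (f w) <= k by apply: below; rewrite tau_w.
apply: (fill_monotone le_w_k); rewrite /= {1 2}/Defs.ord1.
have below_w a : Defs.ord1 tau a <= j -> Defs.ord1 sigma (f a) <= sigma (f w).
  by move=> le_a; apply: tau_sigma; move: le_a tau_w; rewrite /Defs.ord1; lia.
apply/orP; right; apply/and4P; split; rewrite ?ltnS.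
- by rewrite (inj_eq f_inj).
- by apply: tau_sigma; move: lt_x tau_w; rewrite /Defs.ord1; lia.
- by apply: tau_sigma; move: lt_y tau_w; rewrite /Defs.ord1; lia.
- apply/existsP; exists (f w).
  by rewrite /Defs.ord1 eqxx (IHj _ _ fill_xw _ below_w) (IHj _ _ fill_yw _ below_w).
Qed.

Section InducedOrdering.

Variables (T U : finType) (f : U -> T) (sigma : T -> 'I_#|T|).
Hypotheses (f_inj : injective f) (sigma_inj : injective sigma).

Definition below_set (a : U) : {set U} := [set b | sigma (f b) < sigma (f a)].

Lemma card_below_set (a : U) : #|below_set a| < #|U|.
Proof.
rewrite -cardsT; apply: proper_card; rewrite properT.
by apply/negP => /eqP full; have := in_setT a; rewrite -full inE ltnn.
Qed.

Definition induced_ordering (a : U) : 'I_#|U| := Ordinal (card_below_set a).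

Local Notation tau := induced_ordering.

Lemma ltn_induced_ordering a b : (tau a < tau b) = (sigma (f a) < sigma (f b)).
Proof.
rewrite /=; case: (ltnP (sigma (f a)) (sigma (f b))) => [lt_ab|le_ba].
- apply: proper_card; apply/properP; split; last by exists a; rewrite !inE ?ltnn.
  by apply/subsetP => c; rewrite !inE => /ltn_trans; apply.
- apply/negbTE; rewrite -leqNgt; apply: subset_leq_card; apply/subsetP => c.
  by rewrite !inE => /leq_trans; apply.
Qed.

Lemma induced_ordering_bij : bijective tau.
Proof.
apply: inj_card_bij; last by rewrite card_ord.
move=> a b eq_ab; apply: f_inj; apply: sigma_inj; apply/val_inj/eqP.
have := ltn_induced_ordering a b; have := ltn_induced_ordering b a.
by rewrite eq_ab ltnn; case: ltngtP.
Qed.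

Lemma induced_ordering_top k a : tau a + k < #|U| -> sigma (f a) + k < #|T|.
Proof.
elim: k a => [|k IHk] a lt_a; first by rewrite addn0.
have [g _ tauK] := induced_ordering_bij.
have lt_next : tau a + 1 < #|U| by lia.
set b := g (Ordinal lt_next).
have tau_b : nat_of_ord (tau b) = tau a + 1 by rewrite tauK.
have lt_ab : sigma (f a) < sigma (f b) by rewrite -ltn_induced_ordering tau_b addn1.
have := IHk b; rewrite tau_b; lia.
Qed.

End InducedOrdering.

Theorem lemma11 (T : finType) (e : rel T)
  (e_sym : symmetric e) (e_irr : irreflexive e) (V' : {set T}) :
  generalized_bartlett e -> generalized_bartlett (@induced T e V').
Proof.
move=> [sigma [/bij_inj sigma_inj no_triangle]].
set U := ({x : T | x \in V'} : finType).
pose tau := induced_ordering (val : U -> T) sigma.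
exists tau; split; first exact: induced_ordering_bij val_inj sigma_inj.
move=> [u [v [w [unfilled [Duv Dvw Duw]]]]].
have last_step a : Defs.ord1 tau a <= #|U| - 2 ->
    Defs.ord1 sigma (val a) <= #|T| - 2.
  move=> le_a; have /(induced_ordering_top val_inj sigma_inj) : tau a + 2 < #|U|.
    by move: le_a; rewrite /Defs.ord1; lia.
  by rewrite /Defs.ord1; lia.
have tau_sigma a b : tau a < tau b -> sigma (val a) < sigma (val b).
  by rewrite ltn_induced_ordering.
apply: no_triangle; exists (val u), (val v), (val w); split => //.
by split; apply: (fill_relpre val_inj tau_sigma) last_step.
Qed.
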